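(* Let $k$ be a field, let $(X,\leq)$ be a locally finite preordered set and let $C=IC(X)$ be its incidence coalgebra. Let $\tilde X=X/\!\sim$ with the induced partial order (also denoted $\leq$). The following assertions are equivalent: (1) $C$ is right co-Frobenius; (2) $C$ is right quasi-co-Frobenius; (3) $C$ is cosemisimple; (4) for any $x,y\in X$ with $x\leq y$ we also have $y\leq x$ (equivalently, elements in different $\sim$-equivalence classes are not comparable); (5) $IC(\tilde X)$ is right co-Frobenius; (6) the order relation on $\tilde X$ is the equality.
   Context: A preorder is a reflexive and transitive relation; $(X,\leq)$ is locally finite if every interval $[x,y]=\{z\mid x\leq z\leq y\}$ is finite. The incidence coalgebra $IC(X)$ is the $k$-vector space with basis $\{e_{x,y}\mid x,y\in X,\ x\leq y\}$, with comultiplication $\Delta(e_{x,y})=\sum_{x\leq z\leq y}e_{x,z}\otimes e_{z,y}$ and counit $\varepsilon(e_{x,y})=\delta_{x,y}$. The relation $x\sim y$ means $x\leq y$ and $y\leq x$; $\tilde X=X/\!\sim$ is a locally finite partially ordered set with the induced order, and $IC(\tilde X)$ is defined in the same way. For a coalgebra $C$, the dual algebra $C^*$ has convolution product $(f g)(c)=\sum f(c_1)g(c_2)$, and $C$ is a right $C^*$-module via $c\leftharpoonup c^*=\sum c^*(c_1)c_2$. $C$ is called right co-Frobenius if $C$ embeds in $C^*$ as a right $C^*$-module, and right quasi-co-Frobenius if $C$ embeds as a right $C^*$-module in a free right $C^*$-module. $C$ is cosemisimple if it is a direct sum of simple subcoalgebras (equivalently, semisimple as a comodule). *)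

From HB Require Import structures.
From mathcomp Require Import all_boot all_order all_algebra.
From mathcomp Require Import boolp classical_sets cardinality fsbigop.
Set Implicit Arguments. Unset Strict Implicit. Unset Printing Implicit Defensive.
Import GRing.Theory.
Local Open Scope classical_set_scope.
Local Open Scope ring_scope.

(* Incidence coalgebra IC(Y) of a locally finite preorder (Y, leY) over a
   field k, written in the basis {e_{x,y} | leY x y}.
   - An element of IC(Y) is its coefficient function c : Y -> Y -> k
     (c x y = coefficient of e_{x,y}), vanishing off the relation, with
     finite support.
   - An element of the dual IC(Y)-dual is its value function f : Y -> Y -> k
     (f x y = f(e_{x,y})), normalised to vanish off the relation. *)

Section Incidence.
Variables (k : fieldType) (Y : Type) (leY : Y -> Y -> Prop).

Definition vec := Y -> Y -> k.

Definition locally_finite :=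
  forall x y, finite_set [set z | leY x z /\ leY z y].

Definition isC (c : vec) : Prop :=
  (forall x y, ~ leY x y -> c x y = 0) /\
  finite_set [set p : Y * Y | c p.1 p.2 != 0].

Definition isCd (f : vec) : Prop := forall x y, ~ leY x y -> f x y = 0.

Definition vlin (a : k) (c d : vec) : vec := fun x y => a * c x y + d x y.
Definition vzero : vec := fun _ _ => 0.

Definition conv (f g : vec) : vec := fun x y =>
  \sum_(z \in ([set z | leY x z /\ leY z y] : set {classic Y})) f x z * g z y.

(* right Cstar-action on C: e_{x,y} <- f = sum_{x<=z<=y} f(e_{x,z}) e_{z,y};
   the coefficient of e_{z,y} in c <- f *)
Definition ract (c f : vec) : vec := fun z y =>
  \sum_(x \in ([set x | leY x z /\ leY z y] : set {classic Y})) c x y * f x z.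

Definition right_coFrobenius : Prop :=
  exists phi : vec -> vec,
    [/\ forall c, isC c -> isCd (phi c),
        forall a c d, isC c -> isC d -> phi (vlin a c d) = vlin a (phi c) (phi d),
        forall c d, isC c -> isC d -> phi c = phi d -> c = d &
        forall c f, isC c -> isCd f -> phi (ract c f) = conv (phi c) f].

(* right quasi-co-Frobenius: C embeds as a right Cstar-module in a free right
   Cstar-module (Cstar)^{(I)} (finitely supported families, componentwise action) *)
Definition right_qcF : Prop :=
  exists (I : Type) (phi : vec -> I -> vec),
    [/\ forall c, isC c -> (forall i, isCd (phi c i)) /\
                           finite_set [set i | phi c i <> vzero],
        forall a c d, isC c -> isC d ->
          phi (vlin a c d) = (fun i => vlin a (phi c i) (phi d i)),
        forall c d, isC c -> isC d -> phi c = phi d -> c = d &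
        forall c f, isC c -> isCd f ->
          phi (ract c f) = (fun i => conv (phi c i) f)].

(* comultiplication: coefficient of e_{a,b} (x) e_{u,v} in Delta(c) *)
Definition Delta (c : vec) (a b u v : Y) : k :=
  if `[< b = u /\ leY a b /\ leY b v >] then c a v else 0.

Definition subcoalgebra (D : set vec) : Prop :=
  [/\ D `<=` isC, D vzero,
      forall a c d, D c -> D d -> D (vlin a c d) &
      forall d, D d -> exists s : seq (vec * vec),
        (forall p, p \in s -> D p.1 /\ D p.2) /\
        forall a b u v, Delta d a b u v = \sum_(p <- s) p.1 a b * p.2 u v].

Definition simple_subcoalgebra (D : set vec) : Prop :=
  [/\ subcoalgebra D, exists d, D d /\ d <> vzero &
      forall E, subcoalgebra E -> E `<=` D -> E = [set vzero] \/ E = D].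

Definition cosemisimple : Prop :=
  exists (I : Type) (D : I -> set vec),
    [/\ forall i, simple_subcoalgebra (D i),
        forall c, isC c -> exists d : I -> vec,
          [/\ forall i, D i (d i), finite_set [set i | d i <> vzero] &
              forall x y, c x y =
                \sum_(i \in ([set: I] : set {classic I})) d i x y] &
        forall d : I -> vec, (forall i, D i (d i)) ->
          finite_set [set i | d i <> vzero] ->
          (forall x y, \sum_(i \in ([set: I] : set {classic I})) d i x y = 0) ->
          forall i, d i = vzero].

End Incidence.

(* The quotient X/~ of a preordered set by x ~ y <-> x <= y /\ y <= x,
   with the induced order. Classes are represented as subsets of X. *)
Section Quotient.
Variables (X : Type) (le : X -> X -> Prop).

Definition equiv_cls (x : X) : set X := [set y | le x y /\ le y x].

Definition quot : Type := {A : set X | exists x, A = equiv_cls x}.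

Definition quot_le (A B : quot) : Prop :=
  exists x y, proj1_sig A = equiv_cls x /\ proj1_sig B = equiv_cls y /\ le x y.

End Quotient.

From HB Require Import structures.
From mathcomp Require Import all_boot all_order all_algebra.
From mathcomp Require Import boolp classical_sets cardinality fsbigop.
From mathcomp Require Import finmap.
Set Implicit Arguments. Unset Strict Implicit. Unset Printing Implicit Defensive.
Import GRing.Theory.
Local Open Scope classical_set_scope.
Local Open Scope ring_scope.

(* If x <= y but not y <= x, then e_xx <- e_xx = e_xx and e_xx <- e_xy = 0, so
   an embedding of C into a free C*-module sends e_xx to a family of g with
   g = g e_xx and g e_xy = 0, which forces g = 0.  A simple subcoalgebra
   containing a vector with a nonzero (a, v)-coordinate contains every e_zw
   with z ~ v ~ w (apply the coproduct twice and read off coordinates), hence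
   is spanned by them; so a decomposition of e_xy into simple pieces forces
   y <= x.  Conversely, for a symmetric preorder the transpose c |-> c^T embeds
   C in C* as a right C*-module, and C is the direct sum of the simple
   subcoalgebras spanned by the e_zw with z, w in one class.  Comparability in
   X/~ is that of representatives, which gives (5) and (6). *)

Lemma fsbig_pointE (V : nmodType) (I : choiceType) {A : set I} (F : I -> V) j :
  (forall i, i <> j -> F i = 0) ->
  \sum_(i \in A) F i = if `[< A j >] then F j else 0.
Proof.
move=> F0; case: asboolP => Aj.
  rewrite -(fsbig_widen [set j]) ?fsbig_set1 //; first by move=> i ->.
  by move=> i [_ /= ij]; exact: F0.
by apply: fsbig1 => i Ai; apply: F0 => ij; subst.
Qed.

Lemma big_seq_pointE (V : nmodType) (T : eqType) (s : seq T) (F : T -> V) j :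
  uniq s -> (forall i, i != j -> F i = 0) ->
  \sum_(i <- s) F i = if j \in s then F j else 0.
Proof.
move=> us F0; case: ifP => js; first by rewrite (bigD1_seq j) //= big1 ?addr0.
by rewrite big1_seq // => i /= iS; apply: F0; apply: contraFN js => /eqP <-.
Qed.

Lemma in_fset_setP (T : choiceType) (A : set T) x :
  finite_set A -> (x \in fset_set A) = `[< A x >].
Proof.
by move=> fA; rewrite in_fset_set //; apply/idP/asboolP => [/set_mem|/mem_set].
Qed.

Section IncidenceVectors.
Variables (k : fieldType) (Y : choiceType) (le : Y -> Y -> Prop).

Definition evec (z w : Y) : vec k Y :=
  fun a b => if (a == z) && (b == w) then 1 else 0.

Lemma evec_neq0 z w a b : evec z w a b != 0 -> a = z /\ b = w.
Proof.
rewrite /evec; case: (a =P z) => [->|] /=; last by rewrite eqxx.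
by case: (b =P w) => [->|] //=; rewrite eqxx.
Qed.

Lemma evec_eq0 z w a b : (a, b) <> (z, w) -> evec z w a b = 0.
Proof. by move=> ne; apply/eqP; apply: contra_notT ne => /evec_neq0 [-> ->]. Qed.

Lemma evec_diag z w : evec z w z w = 1.
Proof. by rewrite /evec !eqxx. Qed.

Lemma evec_neq_vzero z w : evec z w <> @vzero k Y.
Proof.
by move/(congr1 (fun c : vec k Y => c z w)); rewrite evec_diag => /eqP; rewrite oner_eq0.
Qed.

Lemma exists_entry_neq0 (c : vec k Y) : c <> @vzero k Y -> exists a b, c a b != 0.
Proof.
move=> cn0; apply: contra_notP cn0 => H; apply/funext=> a; apply/funext=> b.
by apply/eqP; apply: contra_notT H => nz; exists a, b.
Qed.

Lemma isC_vzero : isC le (@vzero k Y).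
Proof.
split=> //; apply: (sub_finite_set (B := set0)); last exact: finite_set0.
by move=> p /=; rewrite eqxx.
Qed.

Lemma isC_vlin a (c d : vec k Y) : isC le c -> isC le d -> isC le (vlin a c d).
Proof.
move=> [c0 cf] [d0 df]; split.
  by move=> x y nxy; rewrite /vlin c0 // d0 // mulr0 addr0.
have : finite_set ([set p : Y * Y | c p.1 p.2 != 0] `|` [set p | d p.1 p.2 != 0]).
  by rewrite finite_setU.
apply: sub_finite_set => p /=; rewrite /vlin.
have [->|] := eqVneq (c p.1 p.2) 0; last by left.
by rewrite mulr0 add0r; right.
Qed.

Lemma isC_evec z w : le z w -> isC le (evec z w).
Proof.
move=> lzw; split=> [a b nab|].
  by apply: evec_eq0 => -[az bw]; apply: nab; rewrite az bw.
apply: (sub_finite_set (B := [set (z, w)])); last exact: finite_set1.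
by move=> [a b] /= /evec_neq0 [-> ->].
Qed.

Lemma sum_evec (c : vec k Y) :
  finite_set [set p : Y * Y | c p.1 p.2 != 0] ->
  (fun u w => \sum_(p <- fset_set [set p : Y * Y | c p.1 p.2 != 0])
      c p.1 p.2 * evec p.1 p.2 u w) = c.
Proof.
move=> fc; apply/funext=> u; apply/funext=> w.
rewrite (big_seq_pointE (j := (u, w))); first last.
- move=> [p1 p2] /eqP pne; rewrite evec_eq0 ?mulr0 //= => -[up wp].
  by apply: pne; rewrite up wp.
- exact: fset_uniq.
rewrite in_fset_setP //= evec_diag mulr1; case: asboolP => // /negP.
by rewrite negbK => /eqP.
Qed.

End IncidenceVectors.

Section Comodule.
Variables (k : fieldType) (Y : choiceType) (le : Y -> Y -> Prop).

Lemma ract_evec a b v :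
  ract le (evec k a b) (evec k a v) =
  if `[< le a v /\ le v b >] then evec k v b else @vzero k Y.
Proof.
apply/funext=> z; apply/funext=> w.
rewrite /ract (fsbig_pointE (I := {classic Y}) (j := a)); last first.
  by move=> x xa; rewrite evec_eq0 ?mul0r // => -[].
rewrite /evec !eqxx /=.
have [->|zv] := eqVneq z v; have [->|wb] := eqVneq w b;
  rewrite ?mulr0 ?mul0r ?mulr1 ?if_same; case: ifP => //= _;
  by rewrite ?eqxx ?(negbTE zv) ?(negbTE wb) ?andbF.
Qed.

Lemma conv_evec (g : vec k Y) u v a w :
  conv le g (evec k u v) a w =
  if (w == v) && `[< le a u /\ le u v >] then g a u else 0.
Proof.
rewrite /conv (fsbig_pointE (I := {classic Y}) (j := u)); last first.
  by move=> z zu; rewrite evec_eq0 ?mulr0 // => -[].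
rewrite /evec eqxx /=.
by have [->|_] := eqVneq w v; [rewrite mulr1 | rewrite mulr0 if_same].
Qed.

Lemma conv_evec_eq0 (g : vec k Y) x y : le x y -> isCd le g ->
  g = conv le g (evec k x x) -> conv le g (evec k x y) = @vzero k Y ->
  g = @vzero k Y.
Proof.
move=> lxy gCd g_xx g_xy.
have gx0 u : g u x = 0.
  have := congr1 (fun c : vec k Y => c u y) g_xy; rewrite conv_evec eqxx /=.
  case: asboolP => [_ //|nl _]; apply: gCd => lux; exact: nl.
apply/funext=> u; apply/funext=> w; rewrite {1}g_xx conv_evec.
by case: ifP; rewrite ?gx0.
Qed.

Lemma right_coFrobenius_qcF : right_coFrobenius k le -> right_qcF k le.
Proof.
case=> phi [phiC phi_lin phi_inj phi_act]; exists unit, (fun c _ => phi c); split.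
- move=> c Cc; split=> [_|]; first exact: phiC.
  by apply: (sub_finite_set (B := [set tt])) => [[] _ //|]; exact: finite_set1.
- by move=> a c d Cc Cd; rewrite phi_lin.
- by move=> c d Cc Cd /(congr1 (fun f => f tt)); exact: phi_inj.
- by move=> c f Cc Cf; rewrite phi_act.
Qed.

Lemma right_qcF_sym (le_refl : forall x, le x x) :
  right_qcF k le -> forall x y, le x y -> le y x.
Proof.
case=> I [phi [phiC phi_lin phi_inj phi_act]] x y lxy.
apply: contrapT => nyx.
have Cxx : isC le (evec k x x) := isC_evec k (le_refl x).
have phi0 : phi (@vzero k Y) = fun=> @vzero k Y.
  have := phi_lin (-1) _ _ (isC_vzero k le) (isC_vzero k le).
  have -> : vlin (-1) (@vzero k Y) (@vzero k Y) = @vzero k Y.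
    by apply/funext=> u; apply/funext=> w; rewrite /vlin /vzero mulr0 addr0.
  move=> ->; apply/funext=> i; apply/funext=> u; apply/funext=> w.
  by rewrite /vlin mulN1r addNr.
have act_xx : phi (evec k x x) = fun i => conv le (phi (evec k x x) i) (evec k x x).
  by rewrite -phi_act ?ract_evec ?asboolT //; case: Cxx.
have act_xy : (fun i => conv le (phi (evec k x x) i) (evec k x y)) = fun=> @vzero k Y.
  by rewrite -phi_act ?ract_evec ?asboolF ?phi0 //; [case | case: (isC_evec k lxy)].
have : phi (evec k x x) = phi (@vzero k Y).
  rewrite phi0; apply/funext=> i; apply: (conv_evec_eq0 lxy).
  - by case: (phiC _ Cxx) => /(_ i).
  - exact: (congr1 (fun f => f i) act_xx).
  - exact: (congr1 (fun f => f i) act_xy).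
by move/(phi_inj _ _ Cxx (isC_vzero k le)); exact: evec_neq_vzero.
Qed.

Lemma sym_right_coFrobenius
    (le_trans : forall x y z, le x y -> le y z -> le x z)
    (le_sym : forall x y, le x y -> le y x) :
  right_coFrobenius k le.
Proof.
exists (fun c x y => c y x); split.
- by move=> c [c0 _] x y nxy; apply: c0 => /le_sym.
- by [].
- move=> c d _ _ E; apply/funext=> x; apply/funext=> y.
  exact: (congr1 (fun f : vec k Y => f y x) E).
- move=> c f _ _; apply/funext=> u; apply/funext=> w; rewrite /ract /conv.
  apply: eq_fsbigl; apply/seteqP; split=> z /= [lzu luw]; split=> //;
  exact: le_trans (le_sym _ _ luw) (le_sym _ _ lzu).
Qed.

End Comodule.

Section Subcoalgebras.
Variables (k : fieldType) (Y : choiceType) (le : Y -> Y -> Prop).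
Hypotheses (le_refl : forall x, le x x)
  (le_trans : forall x y z, le x y -> le y z -> le x z).
Variable E : set (vec k Y).
Hypothesis subE : subcoalgebra le E.

Lemma subcoalgebra_sum (T : eqType) (s : seq T) (a : T -> k) (g : T -> vec k Y) :
  (forall p, p \in s -> E (g p)) ->
  E (fun u w => \sum_(p <- s) a p * g p u w).
Proof.
have [_ E0 Elin _] := subE; elim: s => [|p s IH] Eg.
  suff -> : (fun u w => \sum_(p <- [::]) a p * g p u w) = @vzero k Y by [].
  by apply/funext=> u; apply/funext=> w; rewrite big_nil.
have -> : (fun u w => \sum_(q <- p :: s) a q * g q u w) =
    vlin (a p) (g p) (fun u w => \sum_(q <- s) a q * g q u w).
  by apply/funext=> u; apply/funext=> w; rewrite big_cons.
apply: Elin; first by apply: Eg; rewrite mem_head.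
by apply: IH => q qs; apply: Eg; rewrite inE qs orbT.
Qed.

Lemma subcoalgebra_Delta_row c a b : E c -> E (fun u w => Delta le c a b u w).
Proof.
move=> Ec; have [_ _ _ /(_ _ Ec) [s [Es Ds]]] := subE.
have -> : (fun u w => Delta le c a b u w) = (fun u w => \sum_(p <- s) p.1 a b * p.2 u w).
  by apply/funext=> u; apply/funext=> w; rewrite Ds.
by apply: subcoalgebra_sum => p /Es [].
Qed.

Lemma subcoalgebra_Delta_col c u w : E c -> E (fun a b => Delta le c a b u w).
Proof.
move=> Ec; have [_ _ _ /(_ _ Ec) [s [Es Ds]]] := subE.
have -> : (fun a b => Delta le c a b u w) = (fun a b => \sum_(p <- s) p.2 u w * p.1 a b).
  by apply/funext=> a; apply/funext=> b; rewrite Ds; apply: eq_bigr => p _; rewrite mulrC.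
by apply: subcoalgebra_sum => p /Es [].
Qed.

Lemma subcoalgebra_le c a b : E c -> c a b != 0 -> le a b.
Proof.
have [EC _ _ _] := subE.
by move=> /EC [c0 _] cab; apply: contrapT => nab; rewrite c0 ?eqxx in cab.
Qed.

(* [e_ab] is recovered from [Delta^2 c] by evaluating the outer tensor factors
   at [e_aa] and [e_bb]. *)
Lemma subcoalgebra_evec c a b : E c -> c a b != 0 -> E (evec k a b).
Proof.
move=> Ec cab; have [_ E0 Elin _] := subE.
have lab := subcoalgebra_le Ec cab.
have Eg := subcoalgebra_Delta_col b b (subcoalgebra_Delta_row a a Ec).
set g := fun u w => Delta le _ u w b b in Eg.
have -> : evec k a b = vlin (c a b)^-1 g (@vzero k Y).
  apply/funext=> u; apply/funext=> w; rewrite /vlin /vzero addr0 /g /Delta.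
  have [->|ua] := eqVneq u a; first have [->|wb] := eqVneq w b.
  - by rewrite evec_diag !asboolT ?mulVf.
  - rewrite evec_eq0 => [|[wb']]; last by rewrite wb' eqxx in wb.
    by rewrite asboolF ?mulr0 // => -[wb' _]; rewrite wb' eqxx in wb.
  rewrite evec_eq0 => [|[ua' _]]; last by rewrite ua' eqxx in ua.
  case: asboolP => _; rewrite ?mulr0 // asboolF ?mulr0 // => -[au _].
  by rewrite au eqxx in ua.
exact: Elin Eg E0.
Qed.

Lemma subcoalgebra_evec_split a b c : le a c -> le c b -> E (evec k a b) ->
  E (evec k a c) /\ E (evec k c b).
Proof.
move=> lac lcb Eab; split.
- apply: (subcoalgebra_evec (subcoalgebra_Delta_col c b Eab)).
  by rewrite /Delta asboolT ?evec_diag ?oner_eq0.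
- apply: (subcoalgebra_evec (subcoalgebra_Delta_row a c Eab)).
  by rewrite /Delta asboolT ?evec_diag ?oner_eq0.
Qed.

Lemma subcoalgebra_evec_cls c a v z w : E c -> c a v != 0 ->
  equiv_cls le v z -> equiv_cls le v w -> E (evec k z w).
Proof.
move=> Ec cav [lvz lzv] [lvw lwv].
have Eav := subcoalgebra_evec Ec cav.
have [_ Evv] := subcoalgebra_evec_split (subcoalgebra_le Ec cav) (le_refl v) Eav.
have [_ Ezv] := subcoalgebra_evec_split lvz lzv Evv.
by have [] := subcoalgebra_evec_split (le_trans lzv lvw) lwv Ezv.
Qed.

End Subcoalgebras.

Section Coproduct.
Variables (k : fieldType) (Y : choiceType) (le : Y -> Y -> Prop).
Hypothesis lf : locally_finite le.

(* [Delta c = sum_(p, t) c_p e_(p.1, t) (x) e_(t, p.2)]; [vlin a x vzero] is [a x]. *)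
Definition Delta_terms (c : vec k Y) : seq (vec k Y * vec k Y) :=
  flatten [seq [seq (vlin (c p.1 p.2) (evec k p.1 t) (@vzero k Y), evec k t p.2)
                | t <- fset_set [set t | le p.1 t /\ le t p.2]]
          | p <- fset_set [set p : Y * Y | c p.1 p.2 != 0]].

Lemma Delta_termsE c a b u w : isC le c ->
  Delta le c a b u w = \sum_(q <- Delta_terms c) q.1 a b * q.2 u w.
Proof.
move=> [c0 cf]; rewrite big_flatten /= big_map.
pose inner p := if b \in fset_set [set t | le p.1 t /\ le t p.2]
  then vlin (c p.1 p.2) (evec k p.1 b) (@vzero k Y) a b * evec k b p.2 u w else 0.
rewrite (eq_bigr inner) => [|p _]; last first.
  rewrite big_map; apply: big_seq_pointE; first exact: fset_uniq.
  move=> t tb; rewrite /= /vlin /vzero evec_eq0 ?(mulr0, mul0r, addr0) //.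
  case=> _ tb'.
  by rewrite tb' eqxx in tb.
rewrite (big_seq_pointE (j := (a, w))); first last.
- move=> [p1 p2] /eqP pa; rewrite /inner; case: ifP => // _.
  rewrite /vlin /vzero /=.
  have [ap|ap] := eqVneq a p1; last first.
    rewrite evec_eq0 ?(mulr0, mul0r, addr0) // => -[ap'].
    by rewrite ap' eqxx in ap.
  rewrite [evec k b p2 u w]evec_eq0 ?mulr0 // => -[_ wp].
  by apply: pa; rewrite ap wp.
- exact: fset_uniq.
rewrite /inner /Delta !in_fset_setP ?(lf a w) //= /vlin /vzero evec_diag mulr1 addr0.
case: (asboolP (c a w != 0)) => [caw|/negP]; last first.
  by rewrite negbK => /eqP ->; rewrite !if_same.
have [->|ub] := eqVneq u b.
  rewrite evec_diag mulr1; case: asboolP => [[_ lab]|nD]; first by rewrite asboolT.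
  by rewrite asboolF // => lab; apply: nD.
rewrite evec_eq0 => [|[ub']]; last by rewrite ub' eqxx in ub.
by rewrite mulr0 if_same asboolF // => -[bu _]; rewrite bu eqxx in ub.
Qed.

Lemma subcoalgebra_of_evec (E : set (vec k Y)) :
  E `<=` isC le -> E (@vzero k Y) ->
  (forall a c d, E c -> E d -> E (vlin a c d)) ->
  (forall c p1 p2 t, E c -> c p1 p2 != 0 -> le p1 t -> le t p2 ->
     E (evec k p1 t) /\ E (evec k t p2)) ->
  subcoalgebra le E.
Proof.
move=> EC E0 Elin Eevec; split => // c Ec; exists (Delta_terms c); split.
  move=> q /flatten_mapP [p ps] /mapP [t tT ->] /=.
  have [_ cf] := EC _ Ec.
  rewrite in_fset_setP // in ps; move/asboolP: ps => cp.
  rewrite in_fset_setP in tT; last exact: lf.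
  move/asboolP: tT => [l1 l2]; have [E1 E2] := Eevec c p.1 p.2 t Ec cp l1 l2.
  by split => //; apply: Elin.
by move=> a b u w; apply: Delta_termsE; exact: EC.
Qed.

End Coproduct.

Section QuotientOrder.
Variables (X : Type) (le : X -> X -> Prop).
Hypotheses (le_refl : forall x, le x x)
  (le_trans : forall x y z, le x y -> le y z -> le x z).

Definition qcls (x : X) : quot le := exist _ (equiv_cls le x) (ex_intro _ x erefl).

Lemma equiv_cls_refl x : equiv_cls le x x.
Proof. by split. Qed.

Lemma equiv_cls_trans x y z : equiv_cls le x y -> equiv_cls le x z -> equiv_cls le y z.
Proof.
by move=> [lxy lyx] [lxz lzx]; split; [exact: le_trans lxz | exact: le_trans lzx lxy].
Qed.

Lemma eq_equiv_cls x y : equiv_cls le x = equiv_cls le y -> le x y /\ le y x.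
Proof. by move=> exy; have := equiv_cls_refl y; rewrite -exy. Qed.

Lemma quot_qcls (A : quot le) a : proj1_sig A a -> A = qcls a.
Proof.
case: A => B [x eB] /= xa; subst B; apply: eq_exist; apply/seteqP; split=> z.
  exact: equiv_cls_trans.
by move/(equiv_cls_trans (equiv_cls_trans xa (equiv_cls_refl x))).
Qed.

Lemma quot_le_refl (A : quot le) : quot_le A A.
Proof. by case: A => B [x eB]; exists x, x. Qed.

Lemma quot_le_trans (A B C : quot le) : quot_le A B -> quot_le B C -> quot_le A C.
Proof.
move=> [x [y [eA [eB lxy]]]] [y' [z [eB' [eC lyz]]]].
have [lyy' _] := eq_equiv_cls (etrans (esym eB) eB').
by exists x, z; split=> //; split=> //; apply: le_trans lxy (le_trans lyy' lyz).
Qed.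

Lemma quot_le_sym : (forall x y, le x y -> le y x) ->
  forall A B : quot le, quot_le A B -> quot_le B A.
Proof.
move=> le_sym A B [x [y [eA [eB lxy]]]].
by exists y, x; split; [|split; last exact: le_sym].
Qed.

Lemma quot_le_antisym_sym : (forall A B : quot le, quot_le A B -> A = B) ->
  forall x y, le x y -> le y x.
Proof.
move=> antisym x y lxy.
have /(congr1 (@proj1_sig _ _)) /= exy : qcls x = qcls y by apply: antisym; exists x, y.
by have [] := eq_equiv_cls exy.
Qed.

Lemma quot_le_sym_antisym : (forall A B : quot le, quot_le A B -> quot_le B A) ->
  forall A B : quot le, quot_le A B -> A = B.
Proof.
move=> qsym A B AB; have [y' [x' [eB' [eA' lyx]]]] := qsym _ _ AB.
move: AB => [x [y [eA [eB lxy]]]].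
have [_ lx'x] := eq_equiv_cls (etrans (esym eA) eA').
have [lyy' _] := eq_equiv_cls (etrans (esym eB) eB').
have xy : equiv_cls le x y by split=> //; apply: le_trans lyy' (le_trans lyx lx'x).
have Ay : proj1_sig A y by rewrite eA.
have By : proj1_sig B y by rewrite eB; exact: equiv_cls_refl.
by rewrite (quot_qcls Ay) (quot_qcls By).
Qed.

End QuotientOrder.

Section Cosemisimple.
Variables (k : fieldType) (Y : choiceType) (le : Y -> Y -> Prop).
Hypotheses (le_refl : forall x, le x x)
  (le_trans : forall x y z, le x y -> le y z -> le x z)
  (lf : locally_finite le).

Definition supported_on (A : set Y) : set (vec k Y) :=
  [set c | isC le c /\ forall a b, c a b != 0 -> A a /\ A b].

Lemma supported_on_evec A z w : A z -> A w -> le z w -> supported_on A (evec k z w).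
Proof.
by move=> Az Aw lzw; split=> [|a b /evec_neq0 [-> ->]]; first exact: isC_evec.
Qed.

Lemma subcoalgebra_supported_on (E : set (vec k Y)) (A : set Y) :
  E `<=` isC le -> E (@vzero k Y) ->
  (forall a c d, E c -> E d -> E (vlin a c d)) ->
  (forall a t b, A a -> A b -> le a t -> le t b -> A t) ->
  (forall z w, A z -> A w -> le z w -> E (evec k z w)) ->
  subcoalgebra le (E `&` supported_on A).
Proof.
move=> EC E0 Elin A_convex Eevec; apply: subcoalgebra_of_evec => //.
- by move=> c [/EC].
- by split=> //; split=> [|a b]; [exact: isC_vzero | rewrite eqxx].
- move=> a c d [Ec [Cc Ac]] [Ed [Cd Ad]]; split; first exact: Elin.
  split=> [|x y]; first exact: isC_vlin.
  rewrite /vlin; have [->|/Ac //] := eqVneq (c x y) 0.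
  by rewrite mulr0 add0r => /Ad.
- move=> c p1 p2 t [Ec [Cc Ac]] cp l1 l2.
  have [A1 A2] := Ac _ _ cp; have At := A_convex _ _ _ A1 A2 l1 l2.
  by split; split; [exact: Eevec | exact: supported_on_evec | exact: Eevec
    | exact: supported_on_evec].
Qed.

Lemma equiv_cls_convex v a t b : equiv_cls le v a -> equiv_cls le v b ->
  le a t -> le t b -> equiv_cls le v t.
Proof.
by move=> [lva _] [_ lbv] lat ltb; split; [exact: le_trans lat | exact: le_trans lbv].
Qed.

Lemma subcoalgebra_supported_on_cls x : subcoalgebra le (supported_on (equiv_cls le x)).
Proof.
have -> : supported_on (equiv_cls le x) = isC le `&` supported_on (equiv_cls le x).
  by apply/seteqP; split=> c; [move=> Mc; split=> //; case: Mc | case].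
apply: subcoalgebra_supported_on => //.
- exact: isC_vzero.
- by move=> *; exact: isC_vlin.
- exact: equiv_cls_convex.
- by move=> z w _ _; exact: isC_evec.
Qed.

(* A simple subcoalgebra meets the subcoalgebra of a class [v] of its support
   in a nonzero subcoalgebra, hence lies inside it. *)
Lemma simple_subcoalgebra_le (E : set (vec k Y)) c a v :
  simple_subcoalgebra le E -> E c -> c a v != 0 -> le v a.
Proof.
move=> [subE _ Emin] Ec cav; have [EC E0 Elin _] := subE.
have Evv : (E `&` supported_on (equiv_cls le v)) (evec k v v).
  split; last exact: supported_on_evec (equiv_cls_refl le_refl v)
    (equiv_cls_refl le_refl v) (le_refl v).
  by apply: (subcoalgebra_evec_cls le_refl le_trans subE Ec cav); exact: equiv_cls_refl.
have subF : subcoalgebra le (E `&` supported_on (equiv_cls le v)).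
  apply: subcoalgebra_supported_on => //; first exact: equiv_cls_convex.
  by move=> z w vz vw _; exact: (subcoalgebra_evec_cls le_refl le_trans subE Ec cav).
case: (Emin _ subF (@subIsetl _ _ _)) => [F0|FE].
  by move: Evv; rewrite F0 => /evec_neq_vzero.
by have [_ [_ /(_ _ _ cav) [[]]]] : (E `&` supported_on (equiv_cls le v)) c by rewrite FE.
Qed.

Lemma simple_supported_on_cls x :
  simple_subcoalgebra le (supported_on (equiv_cls le x)).
Proof.
split; first exact: subcoalgebra_supported_on_cls.
  exists (evec k x x); split; last exact: evec_neq_vzero.
  exact: supported_on_evec (equiv_cls_refl le_refl x) (equiv_cls_refl le_refl x)
    (le_refl x).
move=> E subE EM; have [_ E0 _ _] := subE.
have [[c [Ec /exists_entry_neq0 [a [b cab]]]]|E_0] :=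
  pselect (exists c, E c /\ c <> @vzero k Y); last first.
  left; apply/seteqP; split=> [c Ec|_ ->] //=.
  by apply: contrapT => c0; apply: E_0; exists c.
right; apply/seteqP; split=> // d [Cd Ad].
have [_ xb] := (EM c Ec).2 _ _ cab.
have Eevec p : p \in fset_set [set p : Y * Y | d p.1 p.2 != 0] -> E (evec k p.1 p.2).
  rewrite in_fset_setP; last by case: Cd.
  move=> /asboolP /Ad [xp1 xp2].
  apply: (subcoalgebra_evec_cls le_refl le_trans subE Ec cab);
  exact: equiv_cls_trans xb _.
rewrite -(sum_evec Cd.2).
exact: (subcoalgebra_sum (g := fun p => evec k p.1 p.2) subE (fun p => d p.1 p.2)
  Eevec).
Qed.

Lemma cosemisimple_sym : cosemisimple k le -> forall x y, le x y -> le y x.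
Proof.
case=> I [D [Dsimple Ddecomp _]] x y lxy; apply: contrapT => nyx.
have [d [Dd _ dsum]] := Ddecomp _ (isC_evec k lxy).
have := dsum x y; rewrite evec_diag fsbig1 => [/eqP|i _]; first by rewrite oner_eq0.
by apply/eqP; apply: contra_notT nyx; exact: simple_subcoalgebra_le (Dsimple i) (Dd i).
Qed.

Lemma sym_cosemisimple : (forall x y, le x y -> le y x) -> cosemisimple k le.
Proof.
move=> le_sym.
exists (quot le), (fun A => supported_on (proj1_sig A)); split.
- by move=> A; case: (proj2_sig A) => x ->; exact: simple_supported_on_cls.
- move=> c [c0 cf].
  pose d (A : quot le) a b := if `[< proj1_sig A a >] then c a b else 0.
  exists d; split.
  + move=> A; case: (proj2_sig A) => x eA; split; first split.
    * by move=> a b nab; rewrite /d; case: ifP => // _; apply: c0.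
    * by apply: sub_finite_set cf => p /=; rewrite /d; case: ifP; rewrite ?eqxx.
    * move=> a b; rewrite /d; case: asboolP => [Aa cab|_]; last by rewrite eqxx.
      have lab : le a b by apply: contrapT => nab; rewrite c0 ?eqxx in cab.
      move: (Aa); rewrite eA => -[lxa lax].
      split; split=> //; first exact: le_trans lxa lab.
      exact: le_trans (le_sym _ _ lab) lax.
  + apply: (sub_finite_set (B := (fun p : Y * Y => qcls le p.1) @`
        [set p : Y * Y | c p.1 p.2 != 0])); last exact: finite_image.
    move=> A /= /exists_entry_neq0 [a [b]]; rewrite /d.
    case: asboolP => [Aa cab|]; last by rewrite eqxx.
    by exists (a, b) => //=; exact/esym/quot_qcls.
  + move=> x y; rewrite (fsbig_pointE (I := {classic (quot le)}) (j := qcls le x)).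
      by rewrite asboolT //= /d asboolT //=; exact: equiv_cls_refl.
    move=> A nA; rewrite /d; case: asboolP => // Ax.
    by case: nA; exact: quot_qcls.
- move=> d Dd _ dsum A; apply/funext=> x; apply/funext=> y.
  apply: contrapT => /eqP nz.
  have [Ax _] := (Dd A).2 _ _ nz.
  have := dsum x y; rewrite (fsbig_pointE (I := {classic (quot le)}) (j := A)).
    by rewrite asboolT // => /eqP; rewrite (negbTE nz).
  move=> B nB; apply: contrapT => /eqP nzB.
  have [Bx _] := (Dd B).2 _ _ nzB.
  by apply: nB; rewrite (quot_qcls le_refl le_trans Bx) (quot_qcls le_refl le_trans Ax).
Qed.

End Cosemisimple.

Theorem mainTheorem1 (k : fieldType) (X : Type) (le : X -> X -> Prop)
    (le_refl : forall x, le x x)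
    (le_trans : forall x y z, le x y -> le y z -> le x z)
    (lf : @locally_finite X le) :
  [<-> @right_coFrobenius k X le;
       @right_qcF k X le;
       @cosemisimple k X le;
       (forall x y, le x y -> le y x);
       @right_coFrobenius k (quot le) (@quot_le X le);
       (forall A B : quot le, @quot_le X le A B -> A = B)].
Proof.
pose Y : choiceType := {classic X}.
pose Q : choiceType := {classic (quot le)}.
tfae.
- exact: (@right_coFrobenius_qcF k Y le).
- move=> qcF; apply: (@sym_cosemisimple k Y le le_refl le_trans lf).
  exact: (@right_qcF_sym k Y le le_refl qcF).
- exact: (@cosemisimple_sym k Y le le_refl le_trans lf).
- move=> le_sym; apply: (@sym_right_coFrobenius k Q); first exact: quot_le_trans.
  exact: quot_le_sym.
- move=> coF; apply: quot_le_sym_antisym => //.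
  exact: (@right_qcF_sym k Q _ (quot_le_refl le_refl) (@right_coFrobenius_qcF k Q _ coF)).
- move=> antisym; apply: (@sym_right_coFrobenius k Y le le_trans).
  exact: quot_le_antisym_sym.
Qed.
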